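(* For every conjunctive query $q$: (a) if $q_1,\dots,q_c$ are the connected components of $q$, then $\chi(q)=\sum_{i=1}^c\chi(q_i)$; (b) for any $M\subseteq\mathrm{atoms}(q)$, $\chi(q/M)=\chi(q)-\chi(M)$; (c) $\chi(q)\le 0$; (d) for any $M\subseteq\mathrm{atoms}(q)$, $\chi(q)\le\chi(q/M)$.
   Context: A conjunctive query $q=S_1(\bar x_1),\dots,S_\ell(\bar x_\ell)$ consists of atoms over distinct relation symbols, $S_j$ having arity $a_j$ (number of argument positions; variables may repeat within an atom). Its hypergraph has the variables as vertices and a hyperedge $\mathrm{vars}(S_j)$ per atom; connected components are the maximal connected subqueries. The characteristic is $\chi(q)=k+\ell-\sum_j a_j-c$, where $k$ is the number of distinct variables, $\ell$ the number of atoms and $c$ the number of connected components. For a set $M$ of atoms, $\chi(M)$ is the characteristic of the query consisting of the atoms in $M$. The contraction $q/M$ is obtained by, for each connected component of (the hypergraph of) $M$, identifying all its variables into a single variable, and deleting the atoms of $M$; the remaining atoms keep their arities. E.g. for $L_5=S_1(x_0,x_1),\dots,S_5(x_4,x_5)$, $L_5/\{S_2,S_4\}=S_1(x_0,x_1),S_3(x_1,x_3),S_5(x_3,x_5)$. *)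

From mathcomp Require Import all_boot all_order all_algebra.
Unset Printing Implicit Defensive.

(* Variables are natural numbers; an atom S_j(x_1,...,x_a) is represented by
   its argument list (a seq of variables, repetitions allowed; its arity is the
   length).  Relation symbols are pairwise distinct, so atoms are identified by
   their position in the query: a conjunctive query is a seq of atoms. *)
Definition atom := seq nat.
Definition query := seq atom.

Definition atom_at (q : query) (i : 'I_(size q)) : atom := nth [::] q i.

Definition atom_adj (q : query) : rel 'I_(size q) :=
  fun i j => has (fun x => x \in atom_at q j) (atom_at q i).

Definition qvars (q : query) : seq nat := undup (flatten q).
Definition nvars (q : query) : nat := size (qvars q).
Definition sum_arity (q : query) : nat := sumn (map size q).

(* number of connected components of the hypergraph; since every variable
   occurs in an atom, components are counted through their atoms *)
Definition ncomp (q : query) : nat := n_comp (atom_adj q) 'I_(size q).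

Definition chi (q : query) : int :=
  (nvars q + size q)%:Z - (sum_arity q + ncomp q)%:Z.

Definition subquery (q : query) (M : {set 'I_(size q)}) : query :=
  [seq atom_at q i | i <- enum 'I_(size q) & i \in M].

Definition vconn (q' : query) (x y : nat) : bool :=
  [exists i : 'I_(size q'), exists j : 'I_(size q'),
     [&& x \in atom_at q' i, y \in atom_at q' j & connect (atom_adj q') i j]].

(* representative of x after identifying the variables of each component of
   q': the least variable of its component (x itself if x is not a variable
   of q') *)
Definition rep (q' : query) (x : nat) : nat :=
  head x (sort leq [seq y <- qvars q' | vconn q' x y]).

Definition contract (q : query) (M : {set 'I_(size q)}) : query :=
  [seq map (rep (subquery q M)) (atom_at q i) | i <- enum 'I_(size q) & i \notin M].

Definition component (q : query) (r : 'I_(size q)) : query :=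
  subquery q [set i | connect (atom_adj q) r i].

From mathcomp Require Import all_boot all_order all_algebra.
From mathcomp Require Import zify.
Import GRing.Theory.

(* Each of the four counts k, l, sum a_j and c in chi is additive over connected
   components, which gives (a).  For (b), let N be the atoms outside M.  The
   variables of q/M are those of N not occurring in M, plus one merged variable
   for each component of M that meets N; the components of q/M are the
   components of q that meet N; and each component of M either meets N, and is
   then counted by its merged variable, or is a component of q lying inside M.
   Collecting terms gives chi(q/M) = chi(q) - chi(M).  A single atom has at most
   as many distinct variables as its arity, so its characteristic is <= 0;
   contracting the atoms one at a time then gives (c), and (d) is (b) together
   with (c) for M. *)

Set Implicit Arguments.
Unset Strict Implicit.

Lemma connect_closedP (T : finType) (e : rel T) x y :
  reflect (forall A : {set T}, (forall u v, u \in A -> e u v -> v \in A) -> x \in A -> y \in A)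
          (connect e x y).
Proof.
apply: (iffP idP).
- move=> /connectP [p pth ->] A HA; elim: p x pth => //= z p IH x /andP[exz pz] xA.
  exact: IH pz (HA _ _ xA exz).
- move=> H; have := H [set z | connect e x z]; rewrite !inE; apply => //.
  move=> u v; rewrite !inE => xu euv; exact: connect_trans xu (connect1 euv).
Qed.

Lemma connect_homo (T U : finType) (e : rel T) (e' : rel U) (h : T -> U) :
  (forall x y, e x y -> e' (h x) (h y)) ->
  forall x y, connect e x y -> connect e' (h x) (h y).
Proof.
move=> He x y /connectP [p pth ->]; elim: p x pth => //= z p IH x /andP[exz pz].
exact: connect_trans (connect1 (He _ _ exz)) (IH _ pz).
Qed.

Lemma connect_reflect (T U : finType) (e : rel T) (e' : rel U) (h : T -> U) :
  injective h -> (forall x y, e' (h x) (h y) -> e x y) ->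
  (forall u v, e' u v -> exists y, v = h y) ->
  forall x y, connect e' (h x) (h y) -> connect e x y.
Proof.
move=> hinj He Him x y /connectP [p pth].
elim: p x pth => /= [x _ /hinj -> //| v p IH x /andP[exv pv] hl].
have [z vz] := Him _ _ exv; subst v.
exact: connect_trans (connect1 (He _ _ exv)) (IH _ pv hl).
Qed.

Lemma n_comp_label (T U : finType) (e : rel T) (a : {set T}) (g : T -> U) :
  connect_sym e -> (forall x y, x \in a -> connect e x y -> y \in a) ->
  {in a &, forall x y, (g x == g y) = connect e x y} -> n_comp e a = #|g @: a|.
Proof.
move=> sym cl lab.
have ra x : x \in a -> fingraph.root e x \in a by move=> xa; exact: cl _ _ xa (connect_root _ _).
have gr x : x \in a -> g (fingraph.root e x) = g x.
  move=> xa; apply/eqP; rewrite lab ?ra // sym; exact: connect_root.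
rewrite /n_comp_mem.
have -> : g @: a = g @: [set x | fingraph.roots e x && (x \in a)].
  apply/setP => u; apply/imsetP/imsetP => [[x xa ->]|[x]].
    by exists (fingraph.root e x); rewrite ?inE ?roots_root ?ra ?gr.
  by rewrite inE => /andP[_ xa] ->; exists x.
rewrite card_in_imset; first by apply: eq_card => x; rewrite !inE.
move=> x y; rewrite !inE => /andP[rx xa] /andP[ry ya] /eqP.
by rewrite lab // -(root_connect sym) => /eqP; rewrite (eqP rx) (eqP ry).
Qed.

Lemma card_vals S (t : seq nat) : (forall x, x \in t -> x <= S) ->
  #|[set x : 'I_S.+1 | val x \in t]| = size (undup t).
Proof.
move=> Ht; set t' := [seq (inord x : 'I_S.+1) | x <- undup t].
have valK x : x \in t -> val (inord x : 'I_S.+1) = x by move=> xt; apply: inordK; rewrite ltnS Ht.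
have ut' : uniq t'.
  rewrite map_inj_in_uniq ?undup_uniq // => x y; rewrite !mem_undup => xt yt.
  by move/(congr1 val); rewrite !valK.
rewrite -(size_map (fun x => inord x : 'I_S.+1)) -/t' -(card_uniqP ut').
apply: eq_card => z; rewrite inE; apply/idP/mapP => [zt|[x]].
  by exists (val z); rewrite ?mem_undup // inord_val.
by rewrite mem_undup => xt ->; rewrite valK.
Qed.

Lemma cardsUD (T : finType) (A B : {set T}) : #|A :|: B| = #|A| + #|B :\: A|.
Proof.
rewrite cardsU cardsD setIC; have := subset_leq_card (subsetIl B A); lia.
Qed.

Lemma cards_disjU (T : finType) (A B : {set T}) :
  A :&: B = set0 -> #|A :|: B| = #|A| + #|B|.
Proof. by move=> AB; rewrite cardsU AB cards0 subn0. Qed.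

Section Hypergraph.
Variables (I : finType) (f : I -> seq nat).
Implicit Types (A B C : {set I}) (S x y z : nat).

Definition share : rel I := fun i j => has (fun x => x \in f j) (f i).
Definition share_in A : rel I := fun i j => [&& i \in A, j \in A & share i j].
Definition occurs A x : bool := [exists i in A, x \in f i].
Definition linked A x y : bool :=
  [exists i, exists j, [&& i \in A, j \in A, x \in f i, y \in f j & connect (share_in A) i j]].

(* Variables are bounded by [S] so that they can be counted as ordinals. *)
Definition vars S A : {set 'I_S.+1} := [set x : 'I_S.+1 | occurs A x].
Definition chi_on S A : int :=
  (#|vars S A| + #|A|)%:Z - (\sum_(i in A) size (f i) + n_comp (share_in A) A)%:Z.

Lemma shareP i j : reflect (exists x, x \in f i /\ x \in f j) (share i j).
Proof. by apply: (iffP hasP) => [[x]|[x []]]; exists x. Qed.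

Lemma share_sym : symmetric share.
Proof. by move=> i j; apply/shareP/shareP => -[x []]; exists x. Qed.

Lemma share_connect_sym : connect_sym share.
Proof. exact: sym_connect_sym share_sym. Qed.

Lemma share_in_connect_sym A : connect_sym (share_in A).
Proof.
by apply: sym_connect_sym => i j; rewrite /share_in share_sym; case: (i \in A); case: (j \in A).
Qed.

Lemma share_in_closed A i j : i \in A -> connect (share_in A) i j -> j \in A.
Proof. by move=> iA /connect_closedP; apply => // u v _ /and3P[]. Qed.

Lemma connect_share_in A i j : connect (share_in A) i j -> connect share i j.
Proof. by apply: connect_sub => u v /and3P[_ _ h]; apply: connect1. Qed.

Lemma connect_share_in_subset A B i j :
  A \subset B -> connect (share_in A) i j -> connect (share_in B) i j.
Proof.
move=> AB; apply: connect_sub => u v /and3P[uA vA h]; apply: connect1.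
by rewrite /share_in (subsetP AB _ uA) (subsetP AB _ vA).
Qed.

Lemma connect_share_in_closed C i j :
  (forall u v, u \in C -> share u v -> v \in C) -> i \in C ->
  connect share i j -> connect (share_in C) i j.
Proof.
move=> HC iC cij; apply/connect_closedP => A HA iA.
have jC : j \in C by move/connect_closedP: cij; apply.
have : j \in (A :&: C) :|: ~: C.
  move/connect_closedP: cij; apply; last by rewrite !inE iA iC.
  move=> u v; rewrite !inE => /orP[/andP[uA uC]|uC] huv.
  - have vC := HC _ _ uC huv; by rewrite vC (HA u v) // /share_in uC vC.
  - apply/orP; right; apply/negP => vC; move/negP: uC; apply; apply: HC vC _.
    by rewrite share_sym.
by rewrite !inE jC /= andbT orbF.
Qed.

Lemma connect_share_nil i j : f i = [::] -> connect share i j -> j = i.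
Proof.
move=> fi /connect_closedP H; apply/set1P; apply: H; last by rewrite inE.
by move=> u v /set1P -> /shareP [x []]; rewrite fi.
Qed.

Lemma occurs_mem A i x : i \in A -> x \in f i -> occurs A x.
Proof. by move=> iA xi; apply/existsP; exists i; rewrite iA. Qed.

Lemma linked_occurs A x y : linked A x y -> occurs A x && occurs A y.
Proof.
case/existsP=> i /existsP [j] /and5P[iA jA xi yj _].
by rewrite (occurs_mem iA xi) (occurs_mem jA yj).
Qed.

Lemma linked_refl A x : occurs A x -> linked A x x.
Proof.
case/existsP=> i /andP[iA xi]; apply/existsP; exists i; apply/existsP; exists i.
by rewrite iA xi connect0.
Qed.

Lemma linked_sym A x y : linked A x y -> linked A y x.
Proof.
case/existsP=> i /existsP [j] /and5P[iA jA xi yj cij].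
apply/existsP; exists j; apply/existsP; exists i.
by rewrite iA jA xi yj share_in_connect_sym.
Qed.

Lemma linked_trans A x y z : linked A x y -> linked A y z -> linked A x z.
Proof.
case/existsP=> i /existsP [j] /and5P[iA jA xi yj cij].
case/existsP=> j' /existsP [k] /and5P[j'A kA yj' zk cjk].
apply/existsP; exists i; apply/existsP; exists k; rewrite iA kA xi zk /=.
apply: connect_trans cij (connect_trans _ cjk); apply: connect1.
by rewrite /share_in jA j'A; apply/shareP; exists y.
Qed.

End Hypergraph.

Section QueryOfFamily.
Variables (S : nat) (I : finType) (f : I -> seq nat) (s : seq I).
Hypothesis s_uniq : uniq s.
Hypothesis f_bound : forall i x, i \in s -> x \in f i -> x <= S.

Let q := map f s.
Let A := [set i | i \in s].

Let h (j : 'I_(size q)) : I := tnth (in_tuple s) (cast_ord (size_map f s) j).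

Let hE j x0 : h j = nth x0 s j.
Proof. by rewrite /h (tnth_nth x0). Qed.

Let h_lt (j : 'I_(size q)) : j < size s.
Proof. by rewrite -(size_map f) ltn_ord. Qed.

Let atom_at_h j : atom_at q j = f (h j).
Proof. by rewrite /atom_at /q (nth_map (h j)) ?h_lt // -hE. Qed.

Let h_in j : h j \in A.
Proof. by rewrite inE (hE _ (h j)) mem_nth ?h_lt. Qed.

Let h_inj : injective h.
Proof.
move=> j k; rewrite (hE j (h j)) (hE k (h j)) => /eqP.
by rewrite nth_uniq ?h_lt // => /eqP/val_inj.
Qed.

Let h_onto i : i \in A -> exists j, i = h j.
Proof.
rewrite inE => iS; have lt : index i s < size q by rewrite size_map index_mem.
by exists (Ordinal lt); rewrite (hE _ i) nth_index.
Qed.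

Let atom_adj_h j k : atom_adj q j k = share_in f A (h j) (h k).
Proof. by rewrite /atom_adj /share_in !h_in !atom_at_h. Qed.

Let connect_h j k : connect (atom_adj q) j k = connect (share_in f A) (h j) (h k).
Proof.
apply/idP/idP; first by apply: connect_homo => u v; rewrite atom_adj_h.
apply: (connect_reflect h_inj) => [u v|u v /and3P[_ vA _]]; first by rewrite atom_adj_h.
exact: h_onto.
Qed.

Lemma qvars_map x : (x \in qvars q) = occurs f A x.
Proof.
rewrite /qvars mem_undup; apply/flatten_mapP/existsP => [[i iS xi]|[i /andP[iA xi]]].
  by exists i; rewrite inE iS.
by exists i => //; move: iA; rewrite inE.
Qed.

Lemma vconn_map x y : vconn q x y = linked f A x y.
Proof.
apply/existsP/existsP => [[j /existsP [k]]|[i /existsP [j]]].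
  rewrite !atom_at_h connect_h => /and3P[xj yk cjk].
  by exists (h j); apply/existsP; exists (h k); rewrite !h_in xj yk cjk.
case/and5P => iA jA xi yj cij.
have [i' ?] := h_onto iA; have [j' ?] := h_onto jA; subst i j.
by exists i'; apply/existsP; exists j'; rewrite !atom_at_h connect_h xi yj cij.
Qed.

Lemma chi_map : chi q = chi_on f S A.
Proof.
rewrite /chi /chi_on /nvars.
have -> : size (qvars q) = #|vars f S A|.
  rewrite /qvars -(@card_vals S); last by move=> x /flatten_mapP [i iS]; apply: f_bound.
  by apply: eq_card => z; rewrite !inE -mem_undup -/(qvars q) qvars_map.
have -> : size q = #|A|.
  by rewrite size_map -(card_uniqP s_uniq); apply: eq_card => i; rewrite inE.
have -> : sum_arity q = \sum_(i in A) size (f i).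
  rewrite /sum_arity /q sumnE !big_map big_uniq //.
  by apply: eq_bigl => i; rewrite inE.
suff -> : ncomp q = n_comp (share_in f A) A by [].
have sym := share_in_connect_sym f A.
rewrite /ncomp (@eq_n_comp_r _ _ _ [set: 'I_(size q)]); last by move=> j; rewrite in_setT.
rewrite (n_comp_label (g := fun j => fingraph.root (share_in f A) (h j))); first last.
- by move=> j k _ _; rewrite root_connect ?connect_h.
- by move=> j k; rewrite !in_setT.
- exact: share_connect_sym (atom_at q).
rewrite (n_comp_label (g := fingraph.root (share_in f A))); first last.
- by move=> i j _ _; rewrite root_connect.
- exact: share_in_closed.
- exact: sym.
rewrite (imset_comp (fingraph.root (share_in f A)) h).
suff -> : h @: [set: 'I_(size q)] = A by [].
by apply/setP => i; apply/imsetP/idP => [[j _ ->]|/h_onto [j ->]] //; exists j.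
Qed.

Let rep_mem x : occurs f A x -> rep q x \in [seq y <- qvars q | vconn q x y].
Proof.
move=> xA; have xL : x \in [seq y <- qvars q | vconn q x y].
  by rewrite mem_filter vconn_map linked_refl // qvars_map.
rewrite /rep; case E: (sort leq _) => [|y l] /=.
  by move: xL; rewrite -(mem_sort leq) E.
by rewrite -(mem_sort leq) E mem_head.
Qed.

Lemma rep_id x : ~~ occurs f A x -> rep q x = x.
Proof.
move=> xA; rewrite /rep (@eq_filter _ _ pred0) ?filter_pred0 // => y /=.
by rewrite vconn_map; apply/negbTE/negP => /linked_occurs /andP[xA' _]; move/negP: xA.
Qed.

Lemma rep_linked x : occurs f A x -> occurs f A (rep q x) /\ linked f A x (rep q x).
Proof. by move=> xA; have := rep_mem xA; rewrite mem_filter vconn_map qvars_map => /andP[]. Qed.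

Lemma eq_rep x y : occurs f A x -> occurs f A y -> (rep q x == rep q y) = linked f A x y.
Proof.
move=> xA yA; apply/eqP/idP => [E|cxy].
  have [_ cx] := rep_linked xA; have [_ cy] := rep_linked yA.
  by apply: linked_trans cx _; rewrite E; apply: linked_sym.
have EL : [seq z <- qvars q | vconn q x z] = [seq z <- qvars q | vconn q y z].
  apply: eq_filter => z; rewrite !vconn_map; apply/idP/idP => [|/(linked_trans cxy)] //.
  by apply: linked_trans; apply: linked_sym.
have := rep_mem xA; rewrite /rep EL.
by case E: (sort leq _) => [|w l] //=; rewrite -(mem_sort leq) E.
Qed.

End QueryOfFamily.

Section Contraction.
Variables (S : nat) (I : finType) (f : I -> seq nat) (M : {set I}) (r : nat -> nat).
Hypothesis f_bound : forall i x, x \in f i -> x <= S.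
Hypothesis r_id : forall x, ~~ occurs f M x -> r x = x.
Hypothesis r_occurs : forall x, occurs f M x -> occurs f M (r x).
Hypothesis eq_r :
  forall x y, occurs f M x -> occurs f M y -> (r x == r y) = linked f M x y.

Let g i := map r (f i).
Let croot := fingraph.root (share f).
Let r_ord (z : 'I_S.+1) : 'I_S.+1 := inord (r z).

Lemma r_bound x : x <= S -> r x <= S.
Proof.
move=> xS; case: (boolP (occurs f M x)) => xM; last by rewrite r_id.
by case/existsP: (r_occurs xM) => i /andP[_ /f_bound].
Qed.

Let val_r_ord z : val (r_ord z) = r z.
Proof. by apply: inordK; rewrite ltnS r_bound // -ltnS ltn_ord. Qed.

Let croot_eq i j : (croot i == croot j) = connect (share f) i j.
Proof. exact/root_connect/share_connect_sym. Qed.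

(* A path of [q] leaves [M] only through a variable whose representative is
   already reached, so it can be shortcut in [q/M]. *)
Lemma connect_share_contract i j : i \in ~: M -> j \in ~: M ->
  connect (share f) i j -> connect (share_in g (~: M)) i j.
Proof.
move=> iN jN cij; apply/connect_closedP => A HA iA.
pose W y := [exists u, [&& u \in A, u \in ~: M & y \in g u]].
pose B := [set u | (u \in A) && (u \in ~: M) || (u \in M) && has (fun x => W (r x)) (f u)].
have : j \in B.
  move/connect_closedP: cij; apply; last by rewrite inE iA iN.
  move=> u v; rewrite !inE => Hu /shareP [x [xu xv]].
  have Wx : W (r x).
    case/orP: Hu => [/andP[uA uN]|/andP[uM /hasP [x' x'u Wx']]].
      by apply/existsP; exists u; rewrite uA inE uN /g map_f.
    suff -> : r x = r x' by [].
    apply/eqP; rewrite eq_r ?(occurs_mem uM) //.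
    by apply/existsP; exists u; apply/existsP; exists u; rewrite uM xu x'u connect0.
  case: (boolP (v \in M)) => vM /=; first by rewrite andbF /=; apply/hasP; exists x.
  have vN : v \in ~: M by rewrite inE.
  rewrite andbT orbF; case/existsP: Wx => u0 /and3P[u0A u0N rxu0]; rewrite (HA u0 v) //.
  by rewrite /share_in u0N vN; apply/shareP; exists (r x); rewrite rxu0 /g map_f.
by rewrite inE => /orP[/andP[]//|/andP[jM _]]; move: jN; rewrite inE jM.
Qed.

Lemma connect_contract_share i j :
  connect (share_in g (~: M)) i j -> connect (share f) i j.
Proof.
apply: connect_sub => u v /and3P[_ _ /shareP [y [/mapP [x xu ->] /mapP[x' x'v E]]]].
case: (boolP (occurs f M x)) => xM.
- have x'M : occurs f M x'.
    case: (boolP (occurs f M x')) => // nx'; move: (r_occurs xM).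
    by rewrite E (r_id nx') (negbTE nx').
  move: (eq_r xM x'M); rewrite E eqxx => /esym/existsP [m /existsP [m']].
  case/and5P => _ _ xm x'm' cmm'.
  apply: connect_trans (connect1 _) (connect_trans (connect_share_in cmm') (connect1 _)).
    by apply/shareP; exists x.
  by apply/shareP; exists x'.
- have ex : x = x'.
    rewrite -(r_id xM) E; apply: r_id; apply/negP => x'M.
    by move: (r_occurs x'M); rewrite -E (r_id xM) (negbTE xM).
  by subst x'; apply: connect1; apply/shareP; exists x.
Qed.

Lemma card_vars_all :
  #|vars f S setT| = #|vars f S M| + #|vars f S (~: M) :\: vars f S M|.
Proof.
rewrite -cardsUD; apply: eq_card => z; rewrite !inE.
apply/existsP/orP => [[i /andP[_ zi]]|[] /existsP [i /andP[_ zi]]]; last 2 first.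
- by exists i; rewrite in_setT.
- by exists i; rewrite in_setT.
by case: (boolP (i \in M)) => iM; [left|right]; apply: (occurs_mem _ zi); rewrite ?inE.
Qed.

Lemma card_vars_contract :
  #|vars g S (~: M)| = #|vars f S (~: M) :\: vars f S M|
                       + #|r_ord @: (vars f S (~: M) :&: vars f S M)|.
Proof.
rewrite -cards_disjU; last first.
  apply/setP => z; rewrite !inE; apply/negbTE/negP.
  case/andP => /andP[zM _] /imsetP [w]; rewrite !inE => /andP[_ wM] zE.
  by move/negP: zM; apply; rewrite zE val_r_ord; exact: r_occurs.
apply: eq_card => z; rewrite !inE; apply/existsP/idP.
- case=> i /andP [iN /mapP [x xi zx]].
  have ivx : val (inord x : 'I_S.+1) = x by apply: inordK; rewrite ltnS (f_bound xi).
  case: (boolP (occurs f M x)) => xM.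
  + apply/orP; right; apply/imsetP; exists (inord x).
      by rewrite !inE ivx xM (occurs_mem iN xi).
    by apply: val_inj; rewrite val_r_ord ivx.
  + by rewrite r_id // in zx; rewrite zx xM (occurs_mem iN xi).
- case/orP => [/andP[zM /existsP [i /andP[iN zi]]]|/imsetP [w]].
    by exists i; rewrite iN /g -(r_id zM) map_f.
  rewrite !inE => /andP[/existsP [i /andP[iN wi]] _] ->.
  by exists i; rewrite iN /= val_r_ord /g map_f.
Qed.

Lemma n_comp_all :
  n_comp (share_in f setT) setT = #|croot @: ~: M| + #|croot @: M :\: croot @: ~: M|.
Proof.
rewrite -cardsUD -imsetU setUC setUCr (n_comp_label (g := croot)) //.
- exact: share_in_connect_sym.
- by move=> i j _ _; rewrite croot_eq; apply: eq_connect => u v; rewrite /share_in !in_setT.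
Qed.

Lemma n_comp_contract : n_comp (share_in g (~: M)) (~: M) = #|croot @: ~: M|.
Proof.
apply: n_comp_label; [exact: share_in_connect_sym | exact: share_in_closed |].
move=> i j iN jN; rewrite croot_eq; apply/idP/idP.
  exact: connect_share_contract.
exact: connect_contract_share.
Qed.

Let touches m := croot m \in croot @: ~: M.

Let touches_connect m m' : connect (share f) m m' -> touches m = touches m'.
Proof. by move=> c; rewrite /touches /croot (fingraph.rootP (share_connect_sym f) c). Qed.

Let touches_nonempty m : m \in M -> touches m -> head 0 (f m) \in f m.
Proof.
move=> mM /imsetP [u uN /eqP]; rewrite croot_eq => cmu.
case E: (f m) => [|x0 l] /=; last by rewrite mem_head.
by move: uN; rewrite (connect_share_nil E cmu) inE mM.
Qed.

Let touches_exit m : m \in M -> touches m ->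
  exists m' y, [/\ connect (share_in f M) m m', y \in f m' & occurs f (~: M) y].
Proof.
move=> mM tm.
case: (boolP [exists m', connect (share_in f M) m m' && has (occurs f (~: M)) (f m')]).
  by case/existsP => m' /andP[c /hasP [y yf yN]]; exists m', y.
move=> nex; exfalso; case/imsetP: tm => u uN /eqP; rewrite croot_eq => cmu.
have : u \in [set j | connect (share_in f M) m j].
  move/connect_closedP: cmu; apply; last by rewrite inE connect0.
  move=> v w; rewrite inE => cv /shareP [x [xv xw]].
  have vM : v \in M := share_in_closed mM cv.
  case: (boolP (w \in M)) => wM.
    by rewrite inE (connect_trans cv) // connect1 // /share_in vM wM; apply/shareP; exists x.
  move/negP: nex; case; apply/existsP; exists v; rewrite cv /=; apply/hasP; exists x => //.
  by apply: (occurs_mem _ xw); rewrite inE.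
by rewrite inE => /(share_in_closed mM) uM; move: uN; rewrite inE uM.
Qed.

(* A component of [M] meeting the other atoms is labelled by the class of its
   variables under [r], any other one by its component in the whole query. *)
Let label m : I + 'I_S.+1 :=
  if touches m then inr (inord (r (head 0 (f m)))) else inl (croot m).

Let val_head m : m \in M -> touches m ->
  val (inord (r (head 0 (f m))) : 'I_S.+1) = r (head 0 (f m)).
Proof.
by move=> mM tm; apply: inordK; rewrite ltnS r_bound // (f_bound (touches_nonempty mM tm)).
Qed.

Lemma n_comp_sub_label : n_comp (share_in f M) M = #|label @: M|.
Proof.
apply: n_comp_label; [exact: share_in_connect_sym | exact: share_in_closed |].
move=> x y xM yM; rewrite /label.
have Tc : connect (share_in f M) x y -> touches x = touches y.
  by move/connect_share_in; apply: touches_connect.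
case tx: (touches x); case ty: (touches y); last first.
- rewrite (inj_eq (@inl_inj _ _)) croot_eq; apply/idP/idP; last exact: connect_share_in.
  move=> c; apply: (@connect_share_in_subset _ _ [set j | connect (share f) x j]).
    apply/subsetP => j; rewrite inE => cj; apply/negPn/negP => jN.
    suff : touches x by rewrite tx.
    by apply/imsetP; exists j; rewrite ?inE //; apply/eqP; rewrite croot_eq.
  apply: connect_share_in_closed => //; last by rewrite inE connect0.
  by move=> u v; rewrite !inE => cu uv; exact: connect_trans cu (connect1 uv).
- by apply/esym/negbTE/negP => /Tc; rewrite tx ty.
- by apply/esym/negbTE/negP => /Tc; rewrite tx ty.
have hx := touches_nonempty xM tx; have hy := touches_nonempty yM ty.
rewrite (inj_eq (@inr_inj _ _)) -val_eqE /= !val_head //.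
rewrite eq_r ?(occurs_mem xM hx) ?(occurs_mem yM hy) //; apply/idP/idP.
  case/existsP => i /existsP [j] /and5P [iM jM xi yj cij].
  apply: connect_trans (connect1 _) (connect_trans cij (connect1 _)).
    by rewrite /share_in xM iM; apply/shareP; exists (head 0 (f x)).
  by rewrite /share_in jM yM; apply/shareP; exists (head 0 (f y)).
by move=> c; apply/existsP; exists x; apply/existsP; exists y; rewrite xM yM hx hy c.
Qed.

Lemma card_label_untouched :
  #|label @: [set m in M | ~~ touches m]| = #|croot @: M :\: croot @: ~: M|.
Proof.
have -> : label @: [set m in M | ~~ touches m] = inl @: (croot @: [set m in M | ~~ touches m]).
  rewrite -imset_comp; apply: eq_in_imset => m; rewrite inE /label => /andP[_ /negbTE ->].
  by [].
rewrite card_imset; last exact: inl_inj.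
apply: eq_card => u; rewrite !inE; apply/imsetP/andP => [[m]|[nt /imsetP [m mM um]]].
  by rewrite inE => /andP [mM ntm] ->; split; [exact: ntm | exact: imset_f].
by exists m; rewrite // inE mM /touches -um.
Qed.

Lemma card_label_touched :
  #|label @: [set m in M | touches m]| = #|r_ord @: (vars f S (~: M) :&: vars f S M)|.
Proof.
suff -> : label @: [set m in M | touches m] =
          inr @: (r_ord @: (vars f S (~: M) :&: vars f S M)).
  by rewrite card_imset //; exact: inr_inj.
apply/setP => z; apply/imsetP/imsetP => [[m]|[w /imsetP [w' w'in ->] ->]].
- rewrite inE => /andP[mM tm] ->.
  have [m' [y [c ym' yN]]] := touches_exit mM tm.
  have m'M := share_in_closed mM c.
  have ivy : val (inord y : 'I_S.+1) = y by apply: inordK; rewrite ltnS (f_bound ym').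
  have hm := touches_nonempty mM tm.
  exists (r_ord (inord y)); first by apply: imset_f; rewrite !inE ivy yN (occurs_mem m'M ym').
  rewrite /label tm; congr inr; apply: val_inj; rewrite /= val_r_ord ivy val_head //.
  apply/eqP; rewrite eq_r ?(occurs_mem mM hm) ?(occurs_mem m'M ym') //.
  by apply/existsP; exists m; apply/existsP; exists m'; rewrite mM hm ym' c m'M.
- move: w'in; rewrite !inE => /andP [/existsP [u /andP [uN wu]] /existsP [m /andP [mM wm]]].
  have tm : touches m.
    apply/imsetP; exists u => //; apply/eqP; rewrite croot_eq connect1 //.
    by apply/shareP; exists (val w').
  have hm := touches_nonempty mM tm.
  exists m; first by rewrite inE mM tm.
  rewrite /label tm; congr inr; apply: val_inj; rewrite /= val_r_ord val_head //.
  apply/eqP; rewrite eq_r ?(occurs_mem mM hm) ?(occurs_mem mM wm) //.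
  by apply/existsP; exists m; apply/existsP; exists m; rewrite mM hm wm connect0.
Qed.

Lemma n_comp_sub : n_comp (share_in f M) M =
  #|croot @: M :\: croot @: ~: M| + #|r_ord @: (vars f S (~: M) :&: vars f S M)|.
Proof.
have splitM : M = [set m in M | ~~ touches m] :|: [set m in M | touches m].
  by apply/setP => m; rewrite !inE; case: (m \in M); case: (touches m).
rewrite n_comp_sub_label splitM imsetU cards_disjU -?splitM.
  by rewrite card_label_untouched card_label_touched.
apply/setP => z; rewrite !inE; apply/negbTE/negP.
case/andP => /imsetP [m1 m1M ->] /imsetP [m2 m2M].
by move: m1M m2M; rewrite !inE /label => /andP[_ /negbTE ->] /andP[_ ->].
Qed.

Lemma chi_on_contract : chi_on g S (~: M) = (chi_on f S setT - chi_on f S M)%R.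
Proof.
have arity_all : \sum_(i in [set: I]) size (f i) =
    \sum_(i in M) size (f i) + \sum_(i in ~: M) size (f i).
  by rewrite (big_setID M) /=; congr (_ + _); apply: eq_bigl => i; rewrite !inE ?andbT.
have arity_contract : \sum_(i in ~: M) size (g i) = \sum_(i in ~: M) size (f i).
  by apply: eq_bigr => i _; rewrite /g size_map.
rewrite /chi_on card_vars_contract card_vars_all n_comp_contract n_comp_all n_comp_sub.
rewrite cardsT -(cardsC M) arity_all arity_contract; lia.
Qed.

End Contraction.

Section Components.
Variables (S : nat) (I : finType) (f : I -> seq nat).

Let comp r := [set i | connect (share f) r i].

Let comp_closed r u v : u \in comp r -> share f u v -> v \in comp r.
Proof. by rewrite !inE => cu uv; exact: connect_trans cu (connect1 uv). Qed.

Lemma sum_over_components (F : I -> nat) :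
  \sum_(r | r \in fingraph.roots (share f)) \sum_(i in comp r) F i = \sum_i F i.
Proof.
have sym := share_connect_sym f.
rewrite [RHS](partition_big (fingraph.root (share f)) (mem (fingraph.roots (share f)))) //;
  last by move=> i _; apply: roots_root.
apply: eq_bigr => r rr; apply: eq_bigl => i.
rewrite inE; apply/idP/eqP => [c|<-]; last by rewrite sym connect_root.
by rewrite -(fingraph.rootP sym c) (eqP rr).
Qed.

Lemma n_comp_component r : n_comp (share_in f (comp r)) (comp r) = 1.
Proof.
rewrite (n_comp_label (g := fun _ => tt)); first last.
- move=> x y; rewrite !inE => rx ry; apply/esym/connect_share_in_closed.
  + exact: comp_closed.
  + by rewrite inE.
  + by apply: connect_trans ry; rewrite share_connect_sym.
- exact: share_in_closed.
- exact: share_in_connect_sym.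
apply/eqP; rewrite eqn_leq -{1}card_unit max_card card_gt0 /=.
by apply/set0Pn; exists tt; apply/imsetP; exists r; rewrite ?inE.
Qed.

(* A variable lies in the component of any atom containing it, and in no other. *)
Lemma vars_components x :
  \sum_(r | r \in fingraph.roots (share f)) (x \in vars f S (comp r)) = (x \in vars f S setT).
Proof.
have sym := share_connect_sym f.
case: (boolP (x \in vars f S setT)) => xT.
- have /existsP [i /andP[_ xi]] : occurs f setT x by move: xT; rewrite inE.
  rewrite (bigD1 (fingraph.root (share f) i)); last exact: roots_root.
  rewrite big1 ?addn0 => [|r /andP[rr rne]].
    by rewrite inE (occurs_mem _ xi) // inE sym connect_root.
  apply/eqP; rewrite eqb0; apply/negP; rewrite inE => /existsP [j /andP[]].
  rewrite inE => crj xj; move/negP: rne; apply; rewrite -(eqP rr); apply/eqP/fingraph.rootP => //.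
  by apply: connect_trans crj (connect1 _); apply/shareP; exists (val x).
- rewrite big1 // => r _; apply/eqP; rewrite eqb0; apply: contra xT.
  by rewrite !inE => /existsP [j /andP[_ xj]]; apply: (occurs_mem _ xj).
Qed.

Lemma chi_on_components :
  chi_on f S setT = (\sum_(r | r \in fingraph.roots (share f)) chi_on f S (comp r))%R.
Proof.
have card_sum (T : finType) (A : {set T}) : #|A| = \sum_x (x \in A : nat).
  by rewrite -sum1_card big_mkcond /=; apply: eq_bigr => x _; case: (x \in A).
have sum_vars : \sum_(r | r \in fingraph.roots (share f)) #|vars f S (comp r)| = #|vars f S setT|.
  under eq_bigr do rewrite card_sum.
  by rewrite exchange_big card_sum; apply: eq_bigr => x _; rewrite vars_components.
have sum_atoms : \sum_(r | r \in fingraph.roots (share f)) #|comp r| = #|[set: I]|.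
  rewrite -sum1_card [RHS](eq_bigl xpredT) => [|i]; last by rewrite in_setT.
  by rewrite -(sum_over_components (fun _ => 1)); apply: eq_bigr => r _; rewrite sum1_card.
have sum_arity : \sum_(r | r \in fingraph.roots (share f)) \sum_(i in comp r) size (f i)
                 = \sum_(i in [set: I]) size (f i).
  by rewrite sum_over_components; apply: eq_bigl => i; rewrite in_setT.
have n_comp_all : n_comp (share_in f setT) setT = \sum_(r | r \in fingraph.roots (share f)) 1.
  rewrite sum1_card (@eq_n_comp _ _ (share f)); last first.
    by apply: eq_connect => u v; rewrite /share_in !in_setT.
  by apply: eq_card => x; rewrite !inE andbT.
rewrite /chi_on n_comp_all.
under [RHS]eq_bigr do rewrite n_comp_component.
rewrite sumrB -!(big_morph Posz PoszD (erefl (Posz 0))) !big_split /=.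
by rewrite sum_vars sum_atoms sum_arity.
Qed.

End Components.

Lemma chi_on_atom_le0 S (I : finType) (f : I -> seq nat) (i : I) :
  (forall x, x \in f i -> x <= S) -> (chi_on f S [set i] <= 0)%R.
Proof.
move=> f_bound; rewrite /chi_on cards1 big_set1.
have -> : n_comp (share_in f [set i]) [set i] = 1.
  rewrite (n_comp_label (g := fun _ => tt)).
  - by rewrite imset_set1 cards1.
  - exact: share_in_connect_sym.
  - exact: share_in_closed.
  - by move=> x y /set1P -> /set1P ->; rewrite connect0.
have : #|vars f S [set i]| <= size (f i).
  have -> : vars f S [set i] = [set x : 'I_S.+1 | val x \in f i].
    apply/setP => z; rewrite !inE; apply/existsP/idP => [[j /andP[/set1P -> //]]|zi].
    by exists i; rewrite inE eqxx.
  by rewrite (card_vals f_bound) size_undup.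
lia.
Qed.

Definition max_var (q : query) : nat := \max_(x <- flatten q) x.

Lemma atom_bound (q : query) (i : 'I_(size q)) x : x \in atom_at q i -> x <= max_var q.
Proof.
move=> xi; apply: (leq_bigmax_seq (F := fun y => y) x) => //; apply/flattenP.
by exists (atom_at q i) => //; rewrite /atom_at mem_nth.
Qed.

Lemma chi_subquery (q : query) (M : {set 'I_(size q)}) :
  chi (subquery q M) = chi_on (atom_at q) (max_var q) M.
Proof.
rewrite /subquery (chi_map (S := max_var q) (filter_uniq _ (enum_uniq _))).
  by congr chi_on; apply/setP => i; rewrite inE mem_filter mem_enum andbT.
by move=> i x _; apply: atom_bound.
Qed.

Lemma chi_query (q : query) : chi q = chi_on (atom_at q) (max_var q) setT.
Proof.
rewrite -chi_subquery; congr chi; rewrite /subquery -[LHS](mkseq_nth [::] q) /mkseq.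
rewrite -val_enum_ord -map_comp (eq_filter (a2 := predT)) ?filter_predT //.
by move=> i; rewrite in_setT.
Qed.

Lemma chi_contract (q : query) (M : {set 'I_(size q)}) :
  chi (contract q M) = (chi q - chi (subquery q M))%R.
Proof.
set S := max_var q; set f := atom_at q; set r := rep (subquery q M).
pose sM := [seq i <- enum 'I_(size q) | i \in M].
pose sN := [seq i <- enum 'I_(size q) | i \notin M].
have idxM : [set i | i \in sM] = M by apply/setP => i; rewrite inE mem_filter mem_enum andbT.
have idxN : [set i | i \in sN] = ~: M by apply/setP => i; rewrite !inE mem_filter mem_enum andbT.
have uM : uniq sM := filter_uniq _ (enum_uniq _).
have r_id := rep_id uM; have r_linked := rep_linked uM; have r_eq := eq_rep uM.
rewrite idxM in r_id r_linked r_eq.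
have r_occurs x : occurs f M x -> occurs f M (r x) by case/r_linked.
have f_bound i x : x \in f i -> x <= S by apply: atom_bound.
rewrite /contract (chi_map (S := S) (f := fun i => map r (f i)) (filter_uniq _ (enum_uniq _))).
  rewrite -/sN idxN chi_on_contract.
  - by rewrite chi_query chi_subquery.
  - exact: f_bound.
  - exact: r_id.
  - exact: r_occurs.
  - exact: r_eq.
move=> i x _ /mapP [y yi ->]; apply: (r_bound (M := M) (r := r) f_bound) (f_bound _ _ yi).
- exact: r_id.
- exact: r_occurs.
Qed.

Lemma size_contract (q : query) (M : {set 'I_(size q)}) : size (contract q M) = #|~: M|.
Proof.
rewrite /contract size_map -(card_uniqP (filter_uniq _ (enum_uniq _))).
by apply: eq_card => i; rewrite !inE mem_filter mem_enum andbT.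
Qed.

(* Contracting a single atom removes it and adds its own, nonpositive,
   characteristic. *)
Lemma chi_le0 (q : query) : (chi q <= 0)%R.
Proof.
have [n] := ubnP (size q); elim: n q => [//|n IH q size_q].
case: (posnP (size q)) => [/size0nil -> | q_pos].
  by rewrite /chi /nvars /qvars /sum_arity /=; lia.
pose i0 : 'I_(size q) := Ordinal q_pos.
have atom_le0 : (chi (subquery q [set i0]) <= 0)%R.
  by rewrite chi_subquery; apply: chi_on_atom_le0 => x /atom_bound.
have contract_le0 : (chi (contract q [set i0]) <= 0)%R.
  by apply: IH; rewrite size_contract cardsC1 card_ord; lia.
have := chi_contract [set i0]; lia.
Qed.

Local Open Scope ring_scope.

Theorem lemma1 (q : query) :
  [/\ chi q = \sum_(r : 'I_(size q) | r \in roots (atom_adj q)) chi (component q r),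
      (forall M : {set 'I_(size q)}, chi (contract q M) = chi q - chi (subquery q M)),
      chi q <= 0
    & (forall M : {set 'I_(size q)}, chi q <= chi (contract q M))].
Proof.
split.
- by rewrite chi_query chi_on_components; apply: eq_bigr => r _; rewrite chi_subquery.
- exact: chi_contract.
- exact: chi_le0.
- by move=> M; rewrite chi_contract; have := chi_le0 (subquery q M); lia.
Qed.
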